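(* Let $n,d,k$ be integers with $0\le k<d\le n$. The map $T\mapsto\mathfrak{b}(T)$ is a bijection from $\mathcal{T}(n,d,k)$ onto $\mathcal{B}(n,d,k)$, and both sets have cardinality $\binom{n-k-1}{d-k-1}$.
   Context: For a graph $G$, $S(G)$ is obtained by adding a new vertex adjacent to all vertices of $G$, and $D(G)$ by adding a new isolated vertex. For a word $w=w_1\cdots w_n$ over $\{S,D\}$ with $w_n=S$, the threshold graph with word $w$ is $w_1(w_2(\cdots w_n(\emptyset)\cdots))$, $\emptyset$ being the graph with no vertices; every threshold graph arises from exactly one such word. The $b$-vector $\mathfrak{b}(T)=(b_1,\ldots,b_d)$ of a threshold graph $T$ with word $w$ containing $d$ letters $S$: insert a separator right after every $S$ in $w$, cutting $w$ into $d$ consecutive subwords read left to right, and let $b_i$ be the length of the $i$-th subword. A graph is $k$-connected if it has at least $k$ vertices and removing any set of fewer than $k$ vertices leaves a connected graph (every graph is $0$-connected). $\mathcal{T}(n,d,k)$ is the set of $k$-connected threshold graphs on $n$ vertices with clique number $d$. $\mathcal{B}(n,d,k)$ is the set of vectors $(b_1,\ldots,b_d)$ of positive integers with $\sum_i b_i=n$ and $b_1=\cdots=b_k=1$. *)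

From mathcomp Require Import all_boot.
Set Implicit Arguments. Unset Strict Implicit. Unset Printing Implicit Defensive.

Definition is_clique (V : finType) (e : rel V) (A : {set V}) : bool :=
  [forall x in A, forall y in A, (x != y) ==> e x y].

Definition clique_number (V : finType) (e : rel V) : nat :=
  \max_(A : {set V} | is_clique e A) #|A|.

(* the subgraph induced on U is connected (empty graph counts as connected) *)
Definition induced_connected (V : finType) (e : rel V) (U : {set V}) : bool :=
  [forall x in U, forall y in U,
     connect [rel a b | [&& e a b, a \in U & b \in U]] x y].

Definition k_connected (V : finType) (e : rel V) (k : nat) : bool :=
  (k <= #|V|) &&
  [forall S : {set V}, (#|S| < k) ==> induced_connected e (~: S)].

(* A word w_1 ... w_n over {S,D} is a sequence of booleans, true = S, false = D.
   Vertex i (0-indexed, i.e. the vertex added by letter w_{i+1}) is adjacent to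
   every vertex j > i iff w_{i+1} = S (later letters are applied first). *)
Definition tg_adj (n : nat) (w : n.-tuple bool) : rel 'I_n :=
  fun i j => (i != j) && nth false w (minn i j).

Definition valid_word (n : nat) (w : n.-tuple bool) : bool :=
  last false w.

(* the b-vector: cut after every S, record subword lengths *)
Fixpoint bvec_aux (acc : nat) (w : seq bool) : seq nat :=
  match w with
  | [::] => [::]
  | true :: w' => acc.+1 :: bvec_aux 0 w'
  | false :: w' => bvec_aux acc.+1 w'
  end.

Definition bvec (w : seq bool) : seq nat := bvec_aux 0 w.

(* T(n,d,k), threshold graphs represented by their (unique) words *)
Definition inT (n d k : nat) (w : n.-tuple bool) : bool :=
  [&& valid_word w, k_connected (tg_adj w) k & clique_number (tg_adj w) == d].

Definition inB (n d k : nat) (b : seq nat) : bool :=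
  [&& size b == d, all (fun x => 0 < x) b, sumn b == n &
      all (fun i => nth 0 b i == 1) (iota 0 k)].
Arguments inT : clear implicits.
Arguments inB : clear implicits.

From mathcomp Require Import all_boot zify.

(* In the threshold graph of a word ending in S, vertex i is adjacent to every later
   vertex exactly when letter i is S.  A clique thus has at most one D-vertex, its
   last one, and the S-vertices form a maximum clique: the clique number is the
   number of S letters.  For k below it, the graph is k-connected iff the first k
   letters are S: if letter i < k is D, deleting the i vertices before it isolates
   it, while deleting fewer than k vertices always spares an S-vertex among the
   first k, which dominates all others.  Cutting after every S matches words ending
   in S with compositions, the S letters with the parts and a prefix S^k with k
   leading parts 1.  So T(n,d,k) consists of the words S^k t S where t has length
   n-k-1 and d-k-1 letters S, which gives the binomial coefficient. *)

Set Implicit Arguments.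
Unset Strict Implicit.
Unset Printing Implicit Defensive.

Lemma card_ord_pred n (p : pred nat) : #|[set i : 'I_n | p i]| = count p (iota 0 n).
Proof.
rewrite cardsE -sum1_card -(big_mkord p (fun _ => 1)).
by rewrite sum1_count /index_iota subn0.
Qed.

Lemma card_ord_ltn n i : i <= n -> #|[set j : 'I_n | j < i]| = i.
Proof.
move=> le_in; rewrite (card_ord_pred _ (fun j => j < i)) -(subnKC le_in) iotaD.
rewrite count_cat add0n -[RHS]addn0; congr (_ + _).
  by rewrite -[RHS](size_iota 0 i) -count_predT; apply: eq_in_count => j; rewrite mem_iota.
rewrite -(count_pred0 (iota i (n - i))); apply: eq_in_count => j.
by rewrite mem_iota /= => /andP [/leq_gtF].
Qed.

Section InducedConnectivity.
Variables (V : finType) (e : rel V) (U : {set V}).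

Lemma induced_connected_dominating (c : V) : symmetric e -> c \in U ->
  {in U, forall x, x != c -> e x c} -> induced_connected e U.
Proof.
move=> e_sym cU c_dom; apply/forallP => x; apply/implyP => xU.
apply/forallP => y; apply/implyP => yU.
apply: (connect_trans (y := c)).
  have [->|xc] := eqVneq x c; first exact: connect0.
  by apply: connect1; rewrite /= c_dom // xU cU.
have [->|yc] := eqVneq y c; first exact: connect0.
by apply: connect1; rewrite /= e_sym c_dom // cU yU.
Qed.

Lemma isolated_not_induced_connected (x y : V) : x \in U -> y \in U -> x != y ->
  {in U, forall z, ~~ e x z} -> ~~ induced_connected e U.
Proof.
move=> xU yU xy x_iso; apply/negP => /forallP /(_ x) /implyP /(_ xU).
move=> /forallP /(_ y) /implyP /(_ yU) /connectP [[|z p]] /=.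
  by move=> _ eq_yx; rewrite eq_yx eqxx in xy.
by case/andP => /and3P [exz _ zU]; rewrite (negbTE (x_iso z zU)) in exz.
Qed.

End InducedConnectivity.

Definition S_prefix (k : nat) (s : seq bool) : bool := all (nth false s) (iota 0 k).

Lemma S_prefixP k s : reflect (forall i, i < k -> nth false s i) (S_prefix k s).
Proof.
apply: (iffP allP) => [Sk i ik | Sk i]; first by apply: Sk; rewrite mem_iota.
by rewrite mem_iota => /andP [_ /Sk].
Qed.

Lemma tg_adj_sym n (w : n.-tuple bool) : symmetric (tg_adj w).
Proof. by move=> i j; rewrite /tg_adj eq_sym minnC. Qed.

Lemma tg_adj_lt n (w : n.-tuple bool) (i j : 'I_n) :
  i < j -> tg_adj w i j = nth false w i.
Proof. by move=> ij; rewrite /tg_adj neq_ltn ij (minn_idPl (ltnW ij)). Qed.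

Lemma card_S_letters n (w : n.-tuple bool) :
  #|[set i : 'I_n | nth false w i]| = count id w.
Proof.
rewrite (card_ord_pred _ (nth false w)) -[in RHS](mkseq_nth false w) /mkseq.
by rewrite count_map size_tuple.
Qed.

Section ThresholdGraph.
Variables (m : nat) (w : m.+1.-tuple bool).
Hypothesis w_last : last false w.

Let S_last : nth false w (@ord_max m).
Proof. by move: w_last; rewrite -nth_last size_tuple. Qed.

Let D_lt_max (z : 'I_m.+1) : ~~ nth false w z -> z < @ord_max m.
Proof.
move=> Dz; rewrite ltn_neqAle leq_ord andbT.
by apply: contra Dz => /eqP ->.
Qed.

Lemma clique_S_below (A : {set 'I_m.+1}) (x y : 'I_m.+1) :
  is_clique (tg_adj w) A -> x \in A -> y \in A -> x < y -> nth false w x.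
Proof.
move=> /forallP /(_ x) /implyP cliqueA xA yA xy.
move: (cliqueA xA) => /forallP /(_ y) /implyP /(_ yA).
by rewrite -(tg_adj_lt w xy) neq_ltn xy.
Qed.

Lemma clique_number_tg_adj : clique_number (tg_adj w) = count id w.
Proof.
rewrite -card_S_letters; apply/eqP; rewrite eqn_leq; apply/andP; split.
  apply/bigmax_leqP => A cliqueA.
  pose f (x : 'I_m.+1) := if nth false w x then x else ord_max.
  have f_inj : {in A &, injective f}.
    move=> x y xA yA; rewrite /f.
    have below := clique_S_below cliqueA.
    case Sx: (nth false w x); case Sy: (nth false w y) => //.
    - move=> x_max; rewrite x_max in xA *.
      by have := below _ _ yA xA (D_lt_max (negbT Sy)); rewrite Sy.
    - move=> y_max; rewrite -y_max in yA *.
      by have := below _ _ xA yA (D_lt_max (negbT Sx)); rewrite Sx.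
    - move=> _; have [xy|yx|/val_inj //] := ltngtP x y.
        by have := below _ _ xA yA xy; rewrite Sx.
      by have := below _ _ yA xA yx; rewrite Sy.
  rewrite -(card_in_imset f_inj); apply/subset_leq_card/subsetP => _ /imsetP [x _ ->].
  by rewrite inE /f; case: ifP.
apply: leq_bigmax_cond; apply/forallP => x; apply/implyP; rewrite inE => Sx.
apply/forallP => y; apply/implyP; rewrite inE => Sy; apply/implyP => xy.
by rewrite /tg_adj xy /=; case: leqP.
Qed.

Lemma k_connected_tg_adj k : k < count id w ->
  k_connected (tg_adj w) k = S_prefix k w.
Proof.
move=> lt_k_count.
have le_k_m : k <= m.+1.
  by rewrite -(size_tuple w); apply: leq_trans (ltnW lt_k_count) (count_size _ _).
rewrite /k_connected card_ord le_k_m /=; apply/forallP/S_prefixP.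
  move=> conn i ik; apply/negPn/negP => Di.
  have im : i < m.+1 := leq_trans ik le_k_m.
  pose x := Ordinal im.
  have := conn [set j : 'I_m.+1 | j < i]; rewrite card_ord_ltn ?(ltnW im) // ik /=.
  apply/negP/(@isolated_not_induced_connected _ _ _ x ord_max).
  - by rewrite !inE ltnn.
  - by rewrite !inE -leqNgt.
  - by rewrite -val_eqE neq_ltn D_lt_max.
  move=> z; rewrite !inE -leqNgt leq_eqVlt => /orP [/eqP iz|xz].
    by rewrite /tg_adj -val_eqE /= iz eqxx.
  by rewrite tg_adj_lt.
move=> Sk T; apply/implyP => small_T.
have /subsetPn [c] : ~~ ([set j : 'I_m.+1 | j < k] \subset T).
  by apply/negP => /subset_leq_card; rewrite card_ord_ltn // leqNgt small_T.
rewrite inE => ck cT; apply: (induced_connected_dominating (c := c) (tg_adj_sym w)).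
  by rewrite inE.
move=> z _; rewrite neq_ltn => /orP [zc|cz].
  by rewrite tg_adj_lt //; apply/Sk/(ltn_trans zc).
by rewrite tg_adj_sym tg_adj_lt //; apply: Sk.
Qed.

End ThresholdGraph.

Fixpoint word_of_bvec (b : seq nat) : seq bool :=
  if b is x :: b' then nseq x.-1 false ++ true :: word_of_bvec b' else [::].

Lemma bvec_aux_nseq acc x s :
  bvec_aux acc (nseq x false ++ true :: s) = (acc + x).+1 :: bvec s.
Proof. by elim: x acc => [|x IHx] acc /=; rewrite ?addn0 // IHx addSnnS. Qed.

Lemma word_of_bvecK b : all (fun x => 0 < x) b -> bvec (word_of_bvec b) = b.
Proof.
elim: b => //= x b IHb /andP [x_gt0 b_pos].
by rewrite /bvec bvec_aux_nseq add0n prednK // IHb.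
Qed.

Lemma word_of_bvec_aux acc s : last false s ->
  word_of_bvec (bvec_aux acc s) = nseq acc false ++ s.
Proof.
elim: s acc => [|[] s IHs] acc //= s_last.
  by case: s IHs s_last => //= a s IHs s_last; rewrite IHs.
by rewrite IHs //; elim: acc => //= acc ->.
Qed.

Lemma bvecK s : last false s -> word_of_bvec (bvec s) = s.
Proof. exact: word_of_bvec_aux. Qed.

Lemma bvec_aux_gt0 acc s : all (fun x => 0 < x) (bvec_aux acc s).
Proof. by elim: s acc => [|[] s IHs] acc //=; rewrite IHs. Qed.

Lemma size_word_of_bvec b : all (fun x => 0 < x) b -> size (word_of_bvec b) = sumn b.
Proof.
elim: b => //= x b IHb /andP [x_gt0 b_pos].
by rewrite size_cat size_nseq /= IHb // addnS -addSn prednK.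
Qed.

Lemma count_word_of_bvec b : count id (word_of_bvec b) = size b.
Proof. by elim: b => //= x b IHb; rewrite count_cat count_nseq /= IHb mul0n. Qed.

Lemma last_word_of_bvec b : b != [::] -> last false (word_of_bvec b).
Proof.
case: b => //= x b _; rewrite last_cat /=.
by elim: b => //= y b IHb; rewrite last_cat.
Qed.

Lemma S_prefix_word_of_bvec k b : all (fun x => 0 < x) b ->
  S_prefix k (word_of_bvec b) = all (fun i => nth 0 b i == 1) (iota 0 k).
Proof.
rewrite /S_prefix; elim: b k => [|x b IHb] [|k] //= /andP [x_gt0 b_pos].
rewrite -add1n iotaDl !all_map; case: x x_gt0 => [|[|x]] //= _.
exact: IHb.
Qed.

Fixpoint bool_seqs (m r : nat) : seq (seq bool) :=
  if m is m'.+1 then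
    map (cons false) (bool_seqs m' r) ++
    (if r is r'.+1 then map (cons true) (bool_seqs m' r') else [::])
  else if r is 0 then [:: [::]] else [::].

Lemma size_bool_seqs m r : size (bool_seqs m r) = 'C(m, r).
Proof.
elim: m r => [|m IHm] [|r] //=; rewrite size_cat !size_map ?IHm //.
by rewrite addn0 !bin0.
Qed.

Lemma mem_map_cons (T : eqType) (x : T) (s : seq T) (ss : seq (seq T)) :
  (s \in map (cons x) ss) = if s is y :: t then (y == x) && (t \in ss) else false.
Proof.
case: s => [|y t]; first by apply/mapP => -[].
by apply/mapP/andP => [[u uss [-> ->]] | [/eqP -> tss]]; last exists t.
Qed.

Lemma mem_bool_seqs m r s : (s \in bool_seqs m r) = (size s == m) && (count id s == r).
Proof.
elim: m r s => [|m IHm] [|r] [|[] s] //=;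
  by rewrite mem_cat !mem_map_cons ?IHm ?orbF ?andbF.
Qed.

Lemma uniq_bool_seqs m r : uniq (bool_seqs m r).
Proof.
have cons_inj (b : bool) : injective (cons b) by move=> s t [].
elim: m r => [|m IHm] [|r] //=; rewrite ?cats0 ?map_inj_uniq //.
rewrite cat_uniq !map_inj_uniq // !IHm /= andbT; apply/hasPn => s.
by rewrite !mem_map_cons; case: s => // -[].
Qed.

Section ThresholdWords.
Variables n d k : nat.
Hypotheses (lt_k_d : k < d) (le_d_n : d <= n).

Definition threshold_words : seq (seq bool) :=
  [seq nseq k true ++ rcons t true | t <- bool_seqs (n - k - 1) (d - k - 1)].

Lemma size_threshold_words : size threshold_words = 'C(n - k - 1, d - k - 1).
Proof. by rewrite size_map size_bool_seqs. Qed.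

Lemma uniq_threshold_words : uniq threshold_words.
Proof.
rewrite map_inj_uniq ?uniq_bool_seqs // => s t /eqP.
by rewrite eqseq_cat // eqxx => /eqP; apply: rcons_injl.
Qed.

Lemma mem_threshold_words s : (s \in threshold_words) =
  (size s == n) && [&& last false s, count id s == d & S_prefix k s].
Proof.
apply/mapP/idP => [[t] | /and4P [/eqP size_s s_last /eqP count_s /S_prefixP Sk]].
  rewrite mem_bool_seqs => /andP [/eqP size_t /eqP count_t] ->.
  rewrite size_cat size_nseq size_rcons last_cat last_rcons -cats1.
  rewrite count_cat count_nseq count_cat size_t count_t /=.
  apply/and3P; split; [apply/eqP; lia | apply/eqP; lia |].
  by apply/S_prefixP => i ik; rewrite nth_cat size_nseq ik nth_nseq ik.
have le_k_s : k <= size s by rewrite size_s; lia.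
have take_s : take k s = nseq k true.
  apply: (@eq_from_nth _ false); rewrite size_takel // ?size_nseq // => i ik.
  by rewrite nth_take // nth_nseq ik Sk.
have size_drop_s : size (drop k s) = n - k by rewrite size_drop size_s.
case/lastP E: (drop k s) size_drop_s => [|t b]; first by move=> /=; lia.
have s_eq : s = nseq k true ++ rcons t b by rewrite -take_s -E cat_take_drop.
move: s_last count_s; rewrite s_eq last_cat last_rcons => ->.
rewrite count_cat count_nseq -cats1 count_cat size_cat /= => count_s size_t.
exists t; last by rewrite cats1.
by rewrite mem_bool_seqs -size_t -count_s addnK mul1n addKn addnK !eqxx.
Qed.

End ThresholdWords.

Lemma bvec_inj : {in [pred s | last false s] &, injective bvec}.
Proof. exact: can_in_inj bvecK. Qed.

Section ThresholdWordsOfBvectors.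
Variables m d k : nat.
Hypothesis lt_k_d : k < d.

Lemma inT_spec (w : m.+1.-tuple bool) :
  inT m.+1 d k w = [&& last false w, count id w == d & S_prefix k w].
Proof.
rewrite /inT /valid_word; case w_last: (last false w) => //=.
rewrite clique_number_tg_adj //; case: eqP => [count_d|_]; last by rewrite andbF.
by rewrite andbT k_connected_tg_adj // count_d.
Qed.

Lemma card_inT : d <= m.+1 ->
  #|[set w : m.+1.-tuple bool | inT m.+1 d k w]| = 'C(m.+1 - k - 1, d - k - 1).
Proof.
move=> le_d_m; rewrite cardE -(size_map val) -size_threshold_words.
apply/perm_size/uniq_perm.
- by rewrite (map_inj_uniq val_inj) enum_uniq.
- exact: uniq_threshold_words.
move=> s; rewrite mem_threshold_words //.
apply/mapP/idP => [[w] | /andP [size_s]].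
  by rewrite mem_enum inE inT_spec // => + ->; rewrite size_tuple eqxx.
by exists (Tuple size_s); rewrite // mem_enum inE inT_spec.
Qed.

Lemma inB_bvec (w : m.+1.-tuple bool) : inT m.+1 d k w -> inB m.+1 d k (bvec w).
Proof.
rewrite inT_spec // => /and3P [w_last /eqP count_w Sk].
have b_pos := bvec_aux_gt0 0 w; rewrite /inB b_pos.
rewrite -count_word_of_bvec -size_word_of_bvec // -S_prefix_word_of_bvec //.
by rewrite bvecK // count_w size_tuple Sk !eqxx.
Qed.

Lemma inT_word_of_bvec b : inB m.+1 d k b ->
  exists2 w : m.+1.-tuple bool, inT m.+1 d k w & bvec w = b.
Proof.
move=> /and4P [/eqP size_b b_pos /eqP sum_b ones_k].
have size_w : size (word_of_bvec b) == m.+1 by rewrite size_word_of_bvec // sum_b.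
exists (Tuple size_w); last exact: word_of_bvecK.
have b_nil : b != [::] by apply: contraTneq lt_k_d => b_nil; rewrite -size_b b_nil.
rewrite inT_spec //= last_word_of_bvec // count_word_of_bvec size_b eqxx.
by rewrite S_prefix_word_of_bvec.
Qed.

End ThresholdWordsOfBvectors.

Theorem mainTheorem4 (n d k : nat) (hkd : k < d) (hdn : d <= n) :
  [/\ {in inT n d k &, injective (fun w : n.-tuple bool => bvec w)},
      (forall w : n.-tuple bool, inT n d k w -> inB n d k (bvec w)),
      (forall b : seq nat, inB n d k b ->
         exists2 w : n.-tuple bool, inT n d k w & bvec w = b),
      #|[set w : n.-tuple bool | inT n d k w]| = 'C(n - k - 1, d - k - 1) &
      exists2 s : seq (seq nat),
        uniq s /\ (forall b, (b \in s) = inB n d k b)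
        & size s = 'C(n - k - 1, d - k - 1)].
Proof.
case: n hdn => [|m] hdn; first by case: d hkd hdn.
have inj : {in inT m.+1 d k &, injective (fun w : m.+1.-tuple bool => bvec w)}.
  move=> w1 w2; rewrite /in_mem /= !inT_spec // => /and3P [last1 _ _] /and3P [last2 _ _].
  by move/(bvec_inj last1 last2)/val_inj.
pose A := [set w : m.+1.-tuple bool | inT m.+1 d k w].
split; [exact: inj | exact: inB_bvec | exact: inT_word_of_bvec | exact: card_inT |].
exists [seq bvec w | w : m.+1.-tuple bool <- enum A];
  last by rewrite size_map -cardE card_inT.
split=> [|b].
  by rewrite map_inj_in_uniq ?enum_uniq // => w1 w2; rewrite !mem_enum !inE; apply: inj.
apply/mapP/idP => [[w] | /(inT_word_of_bvec hkd) [w w_inT <-]].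
  by rewrite mem_enum inE => /(inB_bvec hkd) + ->.
by exists w; rewrite // mem_enum inE.
Qed.
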